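(* Let $(F,v)$ be a Krasner valued hyperfield whose norm $\rho_v$ has trivial invariance group, i.e. $\mathrm{ig}(\rho_v)=\{0\}$. Then $\mathcal{O}_v=\{x\in F: x-x\subseteq 1-1\}$.
   Context: A hyperfield is $(F,+,\cdot,0,1)$ with $+$ a multivalued operation making $(F,+,0)$ a canonical hypergroup (associative, commutative, unique inverses $-x$ with $0\in x+(-x)$, and $z\in x+y\Rightarrow y\in z+(-x)$; write $x-y:=x+(-y)$, $A+B:=\bigcup_{a\in A,b\in B}a+b$), $(F,\cdot)$ commutative with $0$ absorbing, $x(y+z)=xy+xz$, and $F\setminus\{0\}$ an abelian group with neutral $1\neq0$. Valuation on $F$: for an ordered abelian group $\Gamma$ and $\infty>\Gamma$ with $\gamma+\infty=\infty+\gamma=\infty$, a surjective map $v:F\to\Gamma\cup\{\infty\}$ with $vx=\infty\iff x=0$, $v(xy)=vx+vy$, $z\in x+y\Rightarrow vz\ge\min\{vx,vy\}$; $vF:=v(F\setminus\{0\})$, $\mathcal{O}_v:=\{x:vx\ge0\}$. An initial segment of $\Gamma$ is $\rho\subseteq\Gamma$ with $\delta\in\rho,\gamma<\delta\Rightarrow\gamma\in\rho$; $\rho+\gamma:=\{\delta+\gamma:\delta\in\rho\}$; ''$\alpha>\rho+\gamma$'' means $\alpha\notin\rho+\gamma$; $\mathrm{ig}(\rho):=\{\gamma\in\Gamma:\rho+\gamma=\rho\}$. Krasner valued hyperfield: a valued hyperfield $(F,v)$ such that (KVH1) for all $x,y\in F$ with $0\notin x+y$, $v(x+y)$ is a singleton;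 (KVH2) there is an initial segment $\rho_v$ of $vF$ with $0\in\rho_v$ (the norm) such that for all $x,y,z,t\in F$ with $z\in x+y$: $t\in x+y$ iff $vs>\rho_v+\min\{vx,vy\}$ for all $s\in z-t$. *)

Set Implicit Arguments.

(* hadd x y z  means  z \in x + y  (x + y is a subset of the carrier). *)
Record Hyperfield := {
  hcar :> Type;
  hadd : hcar -> hcar -> hcar -> Prop;
  hmul : hcar -> hcar -> hcar;
  hzero : hcar;
  hone : hcar;
  hneg : hcar -> hcar;
  hadd_nonempty : forall x y, exists z, hadd x y z;
  hadd_comm : forall x y z, hadd x y z <-> hadd y x z;
  hadd_assoc : forall x y z w,
      (exists u, hadd x y u /\ hadd u z w) <-> (exists u, hadd y z u /\ hadd x u w);
  hadd_zero : forall x w, hadd x hzero w <-> w = x;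
  hneg_inv : forall x, hadd x (hneg x) hzero;
  hneg_uniq : forall x y, hadd x y hzero -> y = hneg x;
  hadd_rev : forall x y z, hadd x y z -> hadd z (hneg x) y;
  hmul_comm : forall x y, hmul x y = hmul y x;
  hmul_assoc : forall x y z, hmul x (hmul y z) = hmul (hmul x y) z;
  hmul_zero : forall x, hmul hzero x = hzero;
  hmul_one : forall x, hmul hone x = x;
  hone_neq0 : hone <> hzero;
  hmul_neq0 : forall x y, x <> hzero -> y <> hzero -> hmul x y <> hzero;
  hmul_inv : forall x, x <> hzero -> exists y, hmul x y = hone;
  (* distributivity as an equality of sets: x(y+z) = xy + xz *)
  hdistr : forall x y z w,
      (exists u, hadd y z u /\ w = hmul x u) <-> hadd (hmul x y) (hmul x z) w
}.

Arguments hadd {h}.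
Arguments hmul {h}.
Arguments hzero {h}.
Arguments hone {h}.
Arguments hneg {h}.

Definition hsub {F : Hyperfield} (x y : F) : F -> Prop := hadd x (hneg y).

Record OrdAbGroup := {
  gcar :> Type;
  gadd : gcar -> gcar -> gcar;
  gzero : gcar;
  gopp : gcar -> gcar;
  gle : gcar -> gcar -> Prop;
  gaddA : forall a b c, gadd a (gadd b c) = gadd (gadd a b) c;
  gaddC : forall a b, gadd a b = gadd b a;
  gadd0 : forall a, gadd a gzero = a;
  gaddN : forall a, gadd a (gopp a) = gzero;
  gle_refl : forall a, gle a a;
  gle_antisym : forall a b, gle a b -> gle b a -> a = b;
  gle_trans : forall a b c, gle a b -> gle b c -> gle a c;
  gle_total : forall a b, gle a b \/ gle b a;
  gle_add : forall a b c, gle a b -> gle (gadd a c) (gadd b c)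
}.

Arguments gadd {o}.
Arguments gzero {o}.
Arguments gopp {o}.
Arguments gle {o}.

(* Gamma \cup {infinity} is modelled as option Gamma, None = infinity. *)
Definition oadd {G : OrdAbGroup} (a b : option G) : option G :=
  match a, b with Some a, Some b => Some (gadd a b) | _, _ => None end.

Definition ole {G : OrdAbGroup} (a b : option G) : Prop :=
  match a, b with
  | _, None => True
  | None, Some _ => False
  | Some a, Some b => gle a b
  end.

Definition is_valuation (F : Hyperfield) (G : OrdAbGroup) (v : F -> option G) : Prop :=
  (forall o : option G, exists x, v x = o) /\
  (forall x, v x = None <-> x = hzero) /\
  (forall x y, v (hmul x y) = oadd (v x) (v y)) /\
  (forall x y z, hadd x y z -> ole (v x) (v z) \/ ole (v y) (v z)).

Definition valuation_ring {F : Hyperfield} {G : OrdAbGroup} (v : F -> option G)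
  : F -> Prop := fun x => ole (Some gzero) (v x).

Definition initial_segment {G : OrdAbGroup} (rho : G -> Prop) : Prop :=
  forall d g, rho d -> gle g d -> g <> d -> rho g.

Definition shift {G : OrdAbGroup} (rho : G -> Prop) (g : G) : G -> Prop :=
  fun a => exists d, rho d /\ a = gadd d g.

(* "alpha > rho + gamma" for alpha, gamma in Gamma \cup {infinity}:
   alpha does not lie in the cut rho + gamma.  For gamma = infinity the cut
   rho + infinity is taken to be all of Gamma. *)
Definition above_shift {G : OrdAbGroup} (rho : G -> Prop) (gamma alpha : option G) : Prop :=
  match alpha, gamma with
  | None, _ => True
  | Some a, None => False
  | Some a, Some g => ~ shift rho g a
  end.

Definition inv_group {G : OrdAbGroup} (rho : G -> Prop) : G -> Prop :=
  fun g => forall a, shift rho g a <-> rho a.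

Definition is_omin {G : OrdAbGroup} (a b m : option G) : Prop :=
  (m = a \/ m = b) /\ ole m a /\ ole m b.

Definition KVH1 (F : Hyperfield) (G : OrdAbGroup) (v : F -> option G) : Prop :=
  forall x y : F, ~ hadd x y hzero ->
    exists o, forall z, hadd x y z -> v z = o.

Definition KVH2_norm (F : Hyperfield) (G : OrdAbGroup) (v : F -> option G)
  (rho : G -> Prop) : Prop :=
  initial_segment rho /\ rho gzero /\
  forall x y z t : F, hadd x y z ->
    forall mn, is_omin (v x) (v y) mn ->
    (hadd x y t <-> forall s, hsub z t s -> above_shift rho mn (v s)).

(* The norm turns the hyperoperation into a cut condition: since [0 ∈ x - x],
   (KVH2) says that [w ∈ x - x] iff [v w > ρ + v x].  By surjectivity of [v],
   [x - x ⊆ 1 - 1] therefore amounts to [ρ ⊆ ρ + v x].  This holds whenever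
   [v x >= 0] because [ρ] is an initial segment; conversely, if [v x < 0] then
   also [ρ + v x ⊆ ρ], so [v x] lies in the invariance group [ig ρ = {0}]. *)
From Stdlib Require Import Classical.

Set Implicit Arguments.

Section OrderedGroup.

Context {G : OrdAbGroup}.

Lemma gadd0l (a : G) : gadd gzero a = a.
Proof. rewrite gaddC; apply gadd0. Qed.

Lemma gaddNK (a b : G) : gadd (gadd a (gopp b)) b = a.
Proof. rewrite <- gaddA, (gaddC _ (gopp b) b), gaddN; apply gadd0. Qed.

Lemma gadd_idem_eq0 (a : G) : gadd a a = a -> a = gzero.
Proof.
  intros Haa.
  rewrite <- (gaddN _ a). rewrite <- Haa at 2.
  rewrite <- gaddA, gaddN, gadd0; reflexivity.
Qed.

Lemma gadd_diag_eq0 (a : G) : gadd a a = gzero -> a = gzero.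
Proof.
  intros Haa.
  destruct (gle_total _ a gzero) as [Ha | Ha];
    apply gle_antisym; auto;
    pose proof (gle_add _ _ _ a Ha) as Ha2; rewrite Haa, gadd0l in Ha2; exact Ha2.
Qed.

Lemma gle_addr_ge0 (d g : G) : gle gzero g -> gle d (gadd d g).
Proof.
  intros Hg. pose proof (gle_add _ _ _ d Hg) as H.
  rewrite gadd0l, gaddC in H; exact H.
Qed.

Lemma gle_addr_le0 (d g : G) : gle g gzero -> gle (gadd d g) d.
Proof.
  intros Hg. pose proof (gle_add _ _ _ d Hg) as H.
  rewrite gadd0l, gaddC in H; exact H.
Qed.

Context {rho : G -> Prop}.
Hypothesis rho_initial : initial_segment rho.

Lemma initial_segment_le (d g : G) : rho d -> gle g d -> rho g.
Proof.
  intros Hd Hgd. destruct (classic (g = d)) as [-> | Hne]; auto.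
  exact (rho_initial Hd Hgd Hne).
Qed.

Lemma shift0 (a : G) : shift rho gzero a <-> rho a.
Proof.
  split.
  - intros [d [Hd ->]]. rewrite gadd0; exact Hd.
  - intros Ha. exists a. rewrite gadd0; auto.
Qed.

Lemma shift_ge0 (g a : G) : gle gzero g -> rho a -> shift rho g a.
Proof.
  intros Hg Ha. exists (gadd a (gopp g)). rewrite gaddNK. split; auto.
  apply (initial_segment_le (d := a)); auto.
  rewrite <- (gaddNK a g) at 2. apply gle_addr_ge0; exact Hg.
Qed.

Lemma shift_le0 (g a : G) : gle g gzero -> shift rho g a -> rho a.
Proof.
  intros Hg [d [Hd ->]]. apply (initial_segment_le (d := d)); auto.
  apply gle_addr_le0; exact Hg.
Qed.

Hypothesis rho_ig_trivial : forall g : G, inv_group rho g <-> g = gzero.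

Lemma sub_shift_iff (g : G) : (forall a, rho a -> shift rho g a) <-> gle gzero g.
Proof.
  split; [intros Hsub | intros Hg a; apply shift_ge0; exact Hg].
  destruct (gle_total _ gzero g) as [Hg | Hg]; auto.
  replace g with (@gzero G) by (symmetry; apply rho_ig_trivial; intros a; split;
    [apply shift_le0; exact Hg | apply Hsub]).
  apply gle_refl.
Qed.

Lemma above_shift_sub_iff (gamma : option G) :
  (forall alpha, above_shift rho gamma alpha -> above_shift rho (Some gzero) alpha)
  <-> ole (Some gzero) gamma.
Proof.
  destruct gamma as [g |]; simpl.
  - rewrite <- sub_shift_iff. split.
    + intros Habove a Ha. apply NNPP. intros Hna.
      apply (Habove (Some a) Hna). apply shift0; exact Ha.
    + intros Hsub [a |] Ha; simpl in *; auto.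
      intros H0a. apply Ha, Hsub, shift0; exact H0a.
  - split; auto. intros _ [a |] Ha; simpl in *; tauto.
Qed.

End OrderedGroup.

Section Hyperfield.

Context {F : Hyperfield}.

Lemma hneg_involutive (x : F) : hneg (hneg x) = x.
Proof. symmetry. apply hneg_uniq, hadd_comm, hneg_inv. Qed.

Lemma hmulr1 (x : F) : hmul x hone = x.
Proof. rewrite hmul_comm; apply hmul_one. Qed.

Lemma hmulrN1 (x : F) : hmul x (hneg hone) = hneg x.
Proof.
  apply hneg_uniq. rewrite <- (hmulr1 x) at 1.
  apply hdistr. exists hzero. split; [apply hneg_inv |].
  rewrite hmul_comm, hmul_zero; reflexivity.
Qed.

Context {G : OrdAbGroup} {v : F -> option G}.
Hypothesis v_valuation : is_valuation F G v.

Lemma valuation_one : v hone = Some gzero.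
Proof.
  destruct v_valuation as [_ [Hv0 [HvM _]]].
  destruct (v hone) as [g |] eqn:Hv1.
  - pose proof (HvM hone hone) as H. rewrite hmul_one, Hv1 in H.
    injection H as H. rewrite (gadd_idem_eq0 (eq_sym H)); reflexivity.
  - exfalso. apply (hone_neq0 F), Hv0, Hv1.
Qed.

Lemma valuation_neg (x : F) : v (hneg x) = v x.
Proof.
  destruct v_valuation as [_ [_ [HvM _]]].
  assert (HvN1 : v (hneg hone) = Some gzero).
  { pose proof (HvM (hneg hone) (hneg hone)) as H.
    rewrite hmulrN1, hneg_involutive, valuation_one in H.
    destruct (v (hneg hone)) as [g |]; simpl in H; try discriminate.
    injection H as H. rewrite (gadd_diag_eq0 g (eq_sym H)); reflexivity. }
  rewrite <- hmulrN1, HvM, HvN1. destruct (v x); simpl; auto. rewrite gadd0; auto.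
Qed.

Context {rho : G -> Prop}.
Hypothesis rho_norm : KVH2_norm F G v rho.

(* Apply (KVH2) to [0 ∈ x - x]: then [z - t] is [0 - w = {-w}]. *)
Lemma mem_sub_self_iff (x w : F) : hsub x x w <-> above_shift rho (v x) (v w).
Proof.
  destruct rho_norm as [_ [_ Hnorm]].
  assert (Hmin : is_omin (v x) (v (hneg x)) (v x)).
  { rewrite valuation_neg. split; auto.
    destruct (v x); simpl; split; auto; apply gle_refl. }
  unfold hsub. rewrite (Hnorm _ _ _ w (hneg_inv F x) _ Hmin), <- (valuation_neg w).
  split.
  - intros H. apply H. apply hadd_comm, hadd_zero; reflexivity.
  - intros H s Hs. apply hadd_comm, hadd_zero in Hs. subst s; exact H.
Qed.

Lemma sub_self_subset_iff (x y : F) :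
  (forall w, hsub x x w -> hsub y y w)
  <-> (forall alpha, above_shift rho (v x) alpha -> above_shift rho (v y) alpha).
Proof.
  destruct v_valuation as [Hsurj _].
  split.
  - intros Hsub alpha Halpha. destruct (Hsurj alpha) as [w <-].
    apply mem_sub_self_iff, Hsub, mem_sub_self_iff; exact Halpha.
  - intros Habove w Hw. apply mem_sub_self_iff, Habove, mem_sub_self_iff; exact Hw.
Qed.

End Hyperfield.

Theorem corollary6p4 (F : Hyperfield) (G : OrdAbGroup) (v : F -> option G)
  (rho : G -> Prop)
  (Hv : is_valuation F G v)
  (H1 : KVH1 F G v)
  (H2 : KVH2_norm F G v rho)
  (Hig : forall g : G, inv_group rho g <-> g = gzero) :
  forall x : F,
    valuation_ring v x <-> (forall w, hsub x x w -> hsub (hone : F) (hone : F) w).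
Proof.
  intros x.
  rewrite (sub_self_subset_iff Hv H2), (valuation_one Hv).
  rewrite (above_shift_sub_iff (proj1 H2) Hig).
  reflexivity.
Qed.
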